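(* Let $P$ be the uniform distribution on $[0,1]$ and $\beta=\{\frac14,\frac12\}$. The conditional optimal set of four-points for $P$ with respect to $\beta$ is $\alpha_4=\{\frac1{12},\frac14,\frac12,\frac56\}$, with $V_4=\frac{5}{768}$ ($\approx0.00651042$).
   Context: For a Borel probability measure $P$ on $\mathbb{R}$ and finite $\beta$ with $\mathrm{card}(\beta)=r$, for $n\ge r$, $V_n=\inf\{\int\min_{a\in\alpha\cup\beta}(x-a)^2dP(x):\mathrm{card}(\alpha)\le n-r\}$; a set $\alpha\cup\beta$ attaining the infimum, with each point of $\beta$ having a Voronoi region of positive $P$-measure, is a conditional optimal set of $n$-points with respect to $\beta$. *)

From HB Require Import structures.
From mathcomp Require Import all_boot all_order all_algebra finmap.
From mathcomp Require Import all_classical all_reals all_analysis.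
Set Implicit Arguments. Unset Strict Implicit. Unset Printing Implicit Defensive.
Import Order.TTheory GRing.Theory Num.Theory.
Local Open Scope classical_set_scope.
Local Open Scope ring_scope.
Local Open Scope ereal_scope.

Section CondQuant.
Context (R : realType).

Definition mindist (S : {fset R}) (x : R) : \bar R :=
  \big[Order.min/+oo]_(a <- S) ((x - a) ^+ 2)%:E.

Definition distortion (P : probability (measurableTypeR R) R) (S : {fset R}) : \bar R :=
  \int[P]_x mindist S x.

Definition condV (P : probability (measurableTypeR R) R) (beta : {fset R}) (n : nat) : \bar R :=
  ereal_inf [set distortion P (alpha `|` beta)%fset |
             alpha in [set alpha : {fset R} | (#|` alpha| <= n - #|` beta|)%N]].

Definition voronoi (S : {fset R}) (a : R) : set R :=
  [set x : R | forall b, b \in S -> ((x - a) ^+ 2 <= (x - b) ^+ 2)%R].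

Definition cond_optimal (P : probability (measurableTypeR R) R) (beta : {fset R}) (n : nat)
    (S : {fset R}) : Prop :=
  (#|` beta| <= n)%N /\
  exists alpha : {fset R},
    [/\ (#|` alpha| <= n - #|` beta|)%N, S = (alpha `|` beta)%fset,
        distortion P S = condV P beta n &
        forall b, b \in beta -> 0 < P (voronoi S b)].

End CondQuant.

From HB Require Import structures.
From mathcomp Require Import all_boot all_order all_algebra finmap.
From mathcomp Require Import all_classical all_reals all_analysis.
From mathcomp Require Import measurable_realfun ring lra.
Import Order.TTheory GRing.Theory Num.Theory numFieldNormedType.Exports.
Set Implicit Arguments. Unset Strict Implicit.
Local Open Scope classical_set_scope.
Local Open Scope ring_scope.

(* A competitor is beta \cup {p, q}; its distortion is the integral over [0, 1]
   of the squared distance to {1/4, 1/2, p, q}.  Cut [0, 1] at 1/4 and 1/2 and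
   bound each piece below by integrating, cell by cell, the squared distance to
   a centre that is nearest there.  On an interval of length L having a centre
   at one end and one free centre c inside, this gives at least L^3/27, with
   equality only when c is at distance 2L/3 from that end.  Hence the pieces
   cost at least 1/1728 (equality iff p = 1/12), 1/768 and 1/216 (equality iff
   q = 5/6), in total 5/768; every other position of p and q makes some piece
   strictly more expensive, e.g. two centres beyond 1/2 leave a gap of length
   1/6 in [1/2, 1]. *)

Section SquaredDistance.
Context (R : realType).
Local Notation mu := (@lebesgue_measure R).

Lemma integral_itv_split (f : R -> R) a m b : a <= m -> m <= b ->
  measurable_fun setT f ->
  (\int[mu]_(x in `[a, b]) (f x)%:E =
   \int[mu]_(x in `[a, m]) (f x)%:E + \int[mu]_(x in `[m, b]) (f x)%:E)%E.
Proof.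
move=> am mb mf; rewrite (@itv_bndbnd_setU _ _ _ (BLeft m)) ?bnd_simp //.
rewrite integral_setU //=; last 2 first.
- exact/measurable_EFinP/measurable_funTS.
- apply/disj_setPS => x [/=]; rewrite !in_itv /= => /andP[_ xm] /andP[mx _].
  by move: (lt_le_trans xm mx); rewrite ltxx.
by rewrite integral_itv_bndo_bndc //; exact/measurable_EFinP/measurable_funTS.
Qed.

Definition sqdist (c x : R) : R := (x - c) ^+ 2.

Lemma sqdist_ge0 c x : 0 <= sqdist c x.
Proof. exact: sqr_ge0. Qed.

Lemma sqdist_le_lmid c d x : c <= d -> 2 * x <= c + d -> sqdist c x <= sqdist d x.
Proof.
move=> cd xcd; have : 0 <= (d - c) * (c + d - 2 * x) by apply: mulr_ge0; lra.
rewrite /sqdist; nra.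
Qed.

Lemma sqdist_le_rmid c d x : d <= c -> c + d <= 2 * x -> sqdist c x <= sqdist d x.
Proof.
move=> dc xcd; have : 0 <= (c - d) * (2 * x - c - d) by apply: mulr_ge0; lra.
rewrite /sqdist; nra.
Qed.

Lemma is_derive_cube (c x : R) :
  is_derive x 1 (3^-1 *: (fun y : R => y - c) ^+ 3) (sqdist c x).
Proof.
apply: is_derive_eq; rewrite subr0 /GRing.scale /= mulr1 mulrA mulVf ?mul1r //.
Qed.

Lemma continuous_sqdist c : continuous (sqdist c).
Proof.
move=> x; have : is_derive x 1 ((fun y : R => y - c) ^+ 2) (2 * (x - c)).
  by apply: is_derive_eq; rewrite /GRing.scale/= subr0 mulr1.
by move=> /(@ex_derive _ _ _ _ _ _ _)/derivable1_diffP/differentiable_continuous.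
Qed.

Lemma measurable_sqdist c : measurable_fun setT (sqdist c).
Proof. exact: continuous_measurable_fun (@continuous_sqdist c). Qed.

Lemma integral_sqdist a b c : a <= b ->
  (\int[mu]_(x in `[a, b]) (sqdist c x)%:E = (((b - c) ^+ 3 - (a - c) ^+ 3) / 3)%:E)%E.
Proof.
rewrite le_eqVlt => /predU1P[->|ab].
  by rewrite set_itvE integral_set1 subrr mul0r.
pose F := 3^-1 *: (fun y : R => y - c) ^+ 3.
have dF x : derivable F x 1 := @ex_derive _ _ _ _ _ _ _ (is_derive_cube c x).
have cF : continuous F.
  by move=> x; apply/differentiable_continuous/derivable1_diffP.
rewrite (@continuous_FTC2 _ _ F) //.
- by rewrite -EFinB /F /GRing.scale /= -mulrBr mulrC.
- exact/continuous_subspaceT/continuous_sqdist.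
- split; [by move=> x _| exact: cvg_at_right_filter (cF a) | exact: cvg_at_left_filter (cF b)].
- by move=> x _; rewrite derive1E (@derive_val _ _ _ _ _ _ _ (is_derive_cube c x)).
Qed.

Lemma le_integral_sqdist (f : R -> R) a b c : a <= b -> measurable_fun setT f ->
  (forall x, a <= x <= b -> sqdist c x <= f x) ->
  ((((b - c) ^+ 3 - (a - c) ^+ 3) / 3)%:E <= \int[mu]_(x in `[a, b]) (f x)%:E)%E.
Proof.
move=> ab mf le_f; rewrite -integral_sqdist //; apply: ge0_le_integral => //=.
- by move=> x _; rewrite lee_fin sqdist_ge0.
- by apply/measurable_EFinP/measurable_funTS; exact: measurable_sqdist.
- exact/measurable_EFinP/measurable_funTS.
Qed.

Lemma integral_eq_sqdist (f : R -> R) a b c : a <= b ->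
  (forall x, a <= x <= b -> f x = sqdist c x) ->
  (\int[mu]_(x in `[a, b]) (f x)%:E = (((b - c) ^+ 3 - (a - c) ^+ 3) / 3)%:E)%E.
Proof.
move=> ab eq_f; rewrite -integral_sqdist //; apply: eq_integral => x.
by rewrite inE /= in_itv /= => /eq_f ->.
Qed.

Lemma le_integral_sqdist2 (f : R -> R) a m b c1 c2 : a <= m -> m <= b ->
  measurable_fun setT f ->
  (forall x, a <= x <= m -> sqdist c1 x <= f x) ->
  (forall x, m <= x <= b -> sqdist c2 x <= f x) ->
  ((((m - c1) ^+ 3 - (a - c1) ^+ 3) / 3 + ((b - c2) ^+ 3 - (m - c2) ^+ 3) / 3)%:E
     <= \int[mu]_(x in `[a, b]) (f x)%:E)%E.
Proof.
move=> am mb mf le1 le2; rewrite (integral_itv_split am mb mf) EFinD.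
by apply: leeD; apply: le_integral_sqdist.
Qed.

Lemma le_lt_excess (P : Prop) (x : R) (I : \bar R) :
  (exists e, [/\ 0 <= e, P -> 0 < e & ((x + e)%:E <= I)%E]) ->
  (x%:E <= I)%E /\ (P -> (x%:E < I)%E).
Proof.
move=> [e [e_ge0 e_gt0 le_e]]; split=> [|/e_gt0 e_gt0'].
  by apply: le_trans le_e; rewrite lee_fin lerDl.
by apply: lt_le_trans le_e; rewrite lte_fin ltrDl.
Qed.

Lemma le_integral_anchor_right (f : R -> R) a b c : a < b -> c <= b ->
  measurable_fun setT f ->
  (forall x, a <= x <= (c + b) / 2 -> sqdist c x <= f x) ->
  (forall x, (c + b) / 2 <= x <= b -> sqdist b x <= f x) ->
  (((b - a) ^+ 3 / 27)%:E <= \int[mu]_(x in `[a, b]) (f x)%:E)%E /\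
  (c != (2 * a + b) / 3 ->
   (((b - a) ^+ 3 / 27)%:E < \int[mu]_(x in `[a, b]) (f x)%:E)%E).
Proof.
move=> ab cb mf le_c le_b; set L := (b - a) ^+ 3 / 27.
have L_gt0 : 0 < L by rewrite divr_gt0 // exprn_gt0 // subr_gt0.
apply: le_lt_excess.
have [m_lt_a|a_le_m] := ltP ((c + b) / 2) a.
  exists (8 * L); split; [lra|lra|].
  have -> : L + 8 * L = ((b - b) ^+ 3 - (a - b) ^+ 3) / 3 by rewrite /L; field.
  by apply: le_integral_sqdist; [lra|exact: mf|move=> x ?; apply: le_b; lra].
(* The two-cell bound exceeds (b - a)^3/27 by exactly this amount. *)
exists ((c - (2 * a + b) / 3) ^+ 2 * (2 * (b - a) / 3 - (b - c) / 4)); split.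
- by apply: mulr_ge0; [exact: sqr_ge0|lra].
- move=> c_ne; apply: mulr_gt0; last by lra.
  by rewrite exprn_even_gt0 //= subr_eq0.
have -> : L + (c - (2 * a + b) / 3) ^+ 2 * (2 * (b - a) / 3 - (b - c) / 4) =
    (((c + b) / 2 - c) ^+ 3 - (a - c) ^+ 3) / 3 + ((b - b) ^+ 3 - ((c + b) / 2 - b) ^+ 3) / 3.
  by rewrite /L; field.
by apply: le_integral_sqdist2 => //; lra.
Qed.

Lemma le_integral_anchor_left (f : R -> R) a b c : a < b -> a <= c ->
  measurable_fun setT f ->
  (forall x, a <= x <= (a + c) / 2 -> sqdist a x <= f x) ->
  (forall x, (a + c) / 2 <= x <= b -> sqdist c x <= f x) ->
  (((b - a) ^+ 3 / 27)%:E <= \int[mu]_(x in `[a, b]) (f x)%:E)%E /\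
  (c != (a + 2 * b) / 3 ->
   (((b - a) ^+ 3 / 27)%:E < \int[mu]_(x in `[a, b]) (f x)%:E)%E).
Proof.
move=> ab ac mf le_a le_c; set L := (b - a) ^+ 3 / 27.
have L_gt0 : 0 < L by rewrite divr_gt0 // exprn_gt0 // subr_gt0.
apply: le_lt_excess.
have [b_lt_m|m_le_b] := ltP b ((a + c) / 2).
  exists (8 * L); split; [lra|lra|].
  have -> : L + 8 * L = ((b - a) ^+ 3 - (a - a) ^+ 3) / 3 by rewrite /L; field.
  by apply: le_integral_sqdist; [lra|exact: mf|move=> x ?; apply: le_a; lra].
exists ((c - (a + 2 * b) / 3) ^+ 2 * (2 * (b - a) / 3 - (c - a) / 4)); split.
- by apply: mulr_ge0; [exact: sqr_ge0|lra].
- move=> c_ne; apply: mulr_gt0; last by lra.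
  by rewrite exprn_even_gt0 //= subr_eq0.
have -> : L + (c - (a + 2 * b) / 3) ^+ 2 * (2 * (b - a) / 3 - (c - a) / 4) =
    (((a + c) / 2 - a) ^+ 3 - (a - a) ^+ 3) / 3 + ((b - c) ^+ 3 - ((a + c) / 2 - c) ^+ 3) / 3.
  by rewrite /L; field.
by apply: le_integral_sqdist2 => //; lra.
Qed.
End SquaredDistance.

Section FourCentres.
Context (R : realType).
Local Notation mu := (@lebesgue_measure R).

Definition dist4 (p q : R) : R -> R :=
  (sqdist (4^-1) \min sqdist (2^-1)) \min (sqdist p \min sqdist q).

Lemma le_dist4 p q x y : y <= sqdist (4^-1) x -> y <= sqdist (2^-1) x ->
  y <= sqdist p x -> y <= sqdist q x -> y <= dist4 p q x.
Proof. by move=> h1 h2 h3 h4; rewrite /dist4 /= !le_min h1 h2 h3 h4. Qed.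

Lemma dist4_le p q x c : c \in [:: 4^-1; 2^-1; p; q] -> dist4 p q x <= sqdist c x.
Proof. by rewrite !inE => /or4P[] /eqP ->; rewrite /dist4 /= !ge_min lexx ?orbT. Qed.

Lemma dist4_ge0 p q x : 0 <= dist4 p q x.
Proof. by apply: le_dist4; exact: sqdist_ge0. Qed.

Lemma dist4C p q : dist4 p q = dist4 q p.
Proof. by apply/funext => x; rewrite /dist4 /= [Order.min (sqdist p x) _]minC. Qed.

Lemma measurable_dist4 p q : measurable_fun setT (dist4 p q).
Proof. by do 2 apply: measurable_minr; exact: measurable_sqdist. Qed.

Definition cost p q a b := (\int[mu]_(x in `[a, b]) (dist4 p q x)%:E)%E.
Arguments cost (p q a b)%_R.

Lemma cost_ge0 p q a b : (0 <= cost p q a b)%E.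
Proof. by apply: integral_ge0 => x _; rewrite lee_fin dist4_ge0. Qed.

Lemma costC p q a b : cost p q a b = cost q p a b.
Proof. by rewrite /cost dist4C. Qed.

Lemma cost_split p q :
  cost p q 0 1 = (cost p q 0 (4^-1) + cost p q (4^-1) (2^-1) + cost p q (2^-1) 1)%E.
Proof.
have mf := measurable_dist4 p q.
rewrite /cost (@integral_itv_split _ _ 0 (4^-1)) ?(@integral_itv_split _ _ (4^-1) (2^-1) 1) //;
  by rewrite ?addeA //; lra.
Qed.

Local Ltac nearest := apply: le_dist4;
  first [exact: lexx | apply: sqdist_le_lmid; lra | apply: sqdist_le_rmid; lra].

Lemma cost_left_far p q : 4^-1 <= p -> 4^-1 <= q -> ((192^-1)%:E <= cost p q 0 (4^-1))%E.
Proof.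
move=> hp hq; have -> : 192^-1 = ((4^-1 - 4^-1) ^+ 3 - (0 - 4^-1) ^+ 3) / 3 :> R by field.
by apply: le_integral_sqdist; [lra|exact: measurable_dist4|move=> x /andP[? ?]; nearest].
Qed.

Lemma cost_left_anchored p q : p <= 4^-1 -> 4^-1 <= q ->
  ((1728^-1)%:E <= cost p q 0 (4^-1))%E /\
  (p != 12^-1 -> ((1728^-1)%:E < cost p q 0 (4^-1))%E).
Proof.
move=> hp hq; have -> : 1728^-1 = (4^-1 - 0) ^+ 3 / 27 :> R by field.
have -> : 12^-1 = (2 * 0 + 4^-1) / 3 :> R by field.
by apply: le_integral_anchor_right; [lra|lra|exact: measurable_dist4|..];
  move=> x /andP[? ?]; nearest.
Qed.

Lemma cost_mid p q : p <= 4^-1 \/ 2^-1 <= p -> q <= 4^-1 \/ 2^-1 <= q ->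
  ((768^-1)%:E <= cost p q (4^-1) (2^-1))%E.
Proof.
move=> hp hq; have -> : 768^-1 = ((3 / 8 - 4^-1) ^+ 3 - (4^-1 - 4^-1) ^+ 3) / 3 +
    ((2^-1 - 2^-1) ^+ 3 - (3 / 8 - 2^-1) ^+ 3) / 3 :> R by field.
by apply: le_integral_sqdist2; [lra|lra|exact: measurable_dist4|..];
  move=> x /andP[? ?]; case: hp => ?; case: hq => ?; nearest.
Qed.

Lemma cost_right_near p q : p <= 2^-1 -> q <= 2^-1 -> ((24^-1)%:E <= cost p q (2^-1) 1)%E.
Proof.
move=> hp hq; have -> : 24^-1 = ((1 - 2^-1) ^+ 3 - (2^-1 - 2^-1) ^+ 3) / 3 :> R by field.
by apply: le_integral_sqdist; [lra|exact: measurable_dist4|move=> x /andP[? ?]; nearest].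
Qed.

Lemma cost_right_anchored p q : p <= 2^-1 -> 2^-1 <= q ->
  ((216^-1)%:E <= cost p q (2^-1) 1)%E /\
  (q != 5 / 6 -> ((216^-1)%:E < cost p q (2^-1) 1)%E).
Proof.
move=> hp hq; have -> : 216^-1 = (1 - 2^-1) ^+ 3 / 27 :> R by field.
have -> : 5 / 6 = (2^-1 + 2 * 1) / 3 :> R by field.
by apply: le_integral_anchor_left; [lra|lra|exact: measurable_dist4|..];
  move=> x /andP[? ?]; nearest.
Qed.

Lemma cost_right_window p q lo : 2^-1 <= lo -> lo + 6^-1 <= 1 ->
  p <= lo \/ lo + 6^-1 <= p -> q <= lo \/ lo + 6^-1 <= q ->
  ((5184^-1)%:E <= cost p q (2^-1) 1)%E.
Proof.
move=> lo_ge lo_le hp hq.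
apply: (@le_trans _ _ (\int[mu]_(x in `[lo, (lo + 12^-1)%R]) (dist4 p q x)%:E)%E).
  have -> : 5184^-1 = ((lo + 12^-1 - lo) ^+ 3 - (lo - lo) ^+ 3) / 3 :> R by field.
  by apply: le_integral_sqdist; [lra|exact: measurable_dist4|..];
    move=> x /andP[? ?]; case: hp => ?; case: hq => ?; nearest.
apply: ge0_subset_integral => //=.
- by apply/measurable_EFinP/measurable_funTS; exact: measurable_dist4.
- by move=> x _; rewrite lee_fin dist4_ge0.
- by move=> x /=; rewrite !in_itv /= => /andP[? ?]; apply/andP; split; lra.
Qed.

(* Two free centres cannot meet all of ]1/2, 2/3[, ]2/3, 5/6[ and ]5/6, 1[. *)
Lemma cost_right_far p q : 2^-1 < p -> 2^-1 < q -> ((5184^-1)%:E <= cost p q (2^-1) 1)%E.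
Proof.
move=> hp hq; have window lo := @cost_right_window p q lo.
have [p1|p1] := leP p (2 / 3); have [q1|q1] := leP q (2 / 3).
- by apply: (window (2 / 3)); lra.
- have [q2|q2] := leP q (5 / 6).
  + by apply: (window (5 / 6)); lra.
  + by apply: (window (2 / 3)); lra.
- have [p2|p2] := leP p (5 / 6).
  + by apply: (window (5 / 6)); lra.
  + by apply: (window (2 / 3)); lra.
- by apply: (window (2^-1)); lra.
Qed.

Lemma cost_gt_anchored p q : p <= 2^-1 -> 2^-1 < q -> ~ (p = 12^-1 /\ q = 5 / 6) ->
  ((5 / 768)%:E < cost p q 0 1)%E.
Proof.
move=> hp hq not_opt; rewrite cost_split.
have [le_R lt_R] := cost_right_anchored hp (ltW hq).
have [p_le|p_gt] := leP p (4^-1); last first.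
  have le_L := cost_left_far (ltW p_gt) (ltW (lt_trans p_gt (le_lt_trans hp hq))).
  apply: lt_le_trans (leeD (leeD le_L (cost_ge0 p q _ _)) le_R).
  by rewrite adde0 -EFinD lte_fin; lra.
have q_ge : 4^-1 <= q by lra.
have [le_L lt_L] := cost_left_anchored p_le q_ge.
have le_M := cost_mid (or_introl p_le) (or_intror (ltW hq)).
have -> : 5 / 768 = 1728^-1 + 768^-1 + 216^-1 :> R by field.
rewrite !EFinD; have [p_opt|p_ne] := eqVneq p 12^-1.
  have q_ne : q != 5 / 6 by apply/eqP => q_opt; exact: not_opt.
  exact: lee_ltD _ (leeD le_L le_M) (lt_R q_ne).
exact: lte_leD _ (lte_leD _ (lt_L p_ne) le_M) le_R.
Qed.

Lemma cost_gt p q : ~ ((p = 12^-1 /\ q = 5 / 6) \/ (p = 5 / 6 /\ q = 12^-1)) ->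
  ((5 / 768)%:E < cost p q 0 1)%E.
Proof.
move=> not_opt; have [hp|hp] := leP p (2^-1); have [hq|hq] := leP q (2^-1).
- rewrite cost_split; apply: lt_le_trans (leeD (leeD (cost_ge0 p q _ _)
    (cost_ge0 p q _ _)) (cost_right_near hp hq)).
  by rewrite !add0e lte_fin; lra.
- by apply: cost_gt_anchored => // opt; apply: not_opt; left.
- by rewrite costC; apply: cost_gt_anchored => // -[q_opt p_opt]; apply: not_opt; right.
- rewrite cost_split.
  have le_L : ((192^-1)%:E <= cost p q 0 (4^-1))%E by apply: cost_left_far; lra.
  have le_M := cost_mid (or_intror (ltW hp)) (or_intror (ltW hq)).
  apply: lt_le_trans (leeD (leeD le_L le_M) (cost_right_far hp hq)).
  by rewrite -!EFinD lte_fin; lra.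
Qed.

Lemma cost_optimum : cost (12^-1) (5 / 6) 0 1 = (5 / 768)%:E.
Proof.
have split m a b (am : a <= m) (mb : m <= b) :=
  integral_itv_split am mb (measurable_dist4 (12^-1) (5 / 6)).
have piece a b c : a <= b -> c \in [:: 4^-1; 2^-1; 12^-1; 5 / 6] ->
    (forall x, a <= x <= b -> sqdist c x <= dist4 (12^-1) (5 / 6) x) ->
    (\int[mu]_(x in `[a, b]) (dist4 (12^-1) (5 / 6) x)%:E =
     (((b - c) ^+ 3 - (a - c) ^+ 3) / 3)%:E)%E.
  move=> ab c_in near; apply: integral_eq_sqdist => // x /near le_x.
  by apply/le_anti; rewrite le_x dist4_le.
(* The cells of {1/12, 1/4, 1/2, 5/6} are cut at the midpoints 1/6, 3/8, 2/3. *)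
rewrite /cost (split (6^-1)); [|lra..].
rewrite (split (3 / 8) (6^-1)); [|lra..].
rewrite (split (2 / 3) (3 / 8)); [|lra..].
rewrite (piece 0 (6^-1) (12^-1)) ?(piece (6^-1) (3 / 8) (4^-1))
  ?(piece (3 / 8) (2 / 3) (2^-1)) ?(piece (2 / 3) 1 (5 / 6)); last first.
all: try by move=> x /andP[? ?]; nearest.
all: try by rewrite !inE eqxx ?orbT.
1-4: lra.
by rewrite -!EFinD; congr EFin; field.
Qed.

Lemma cost_ge p q : ((5 / 768)%:E <= cost p q 0 1)%E.
Proof.
have [[[-> ->]|[-> ->]]|not_opt] :=
  pselect ((p = 12^-1 /\ q = 5 / 6) \/ (p = 5 / 6 /\ q = 12^-1)).
- by rewrite cost_optimum.
- by rewrite costC cost_optimum.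
- exact/ltW/cost_gt.
Qed.

End FourCentres.

Lemma fsetU2_enum (T : choiceType) (b1 b2 : T) (A : {fset T}) : (#|` A| <= 2)%N ->
  exists p q, (A `|` [fset b1; b2])%fset =i [:: b1; b2; p; q].
Proof.
case E: (enum_fset A) => [|p [|q [|? ?]]] // _;
  [exists b1, b1 | exists p, b1 | exists p, q] => a;
  rewrite in_fsetU in_fset2 -[a \in A]/(a \in enum_fset A) E !inE;
  by case: (a == b1); case: (a == b2); rewrite ?orbT ?orbF ?orbb.
Qed.

Section Distortion.
Context (R : realType).
Local Notation P := (uniform_prob (@ltr01 R) : probability (measurableTypeR R) R).
Local Notation beta := ([fset 4^-1; 2^-1]%fset : {fset R}).
Local Notation alpha4 := ([fset 12^-1; 4^-1; 2^-1; 5 / 6]%fset : {fset R}).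

Lemma mindist_dist4 (S : {fset R}) p q : S =i [:: 4^-1; 2^-1; p; q] ->
  mindist S = fun x => (dist4 p q x)%:E.
Proof.
move=> SE; apply/funext => x; apply/le_anti/andP; split.
  by rewrite /dist4 /= !EFin_min !le_min !ge_bigmin_seq ?SE ?inE ?eqxx ?orbT.
rewrite /mindist big_seq; apply: le_bigmin => [|a aS]; first exact: leey.
by rewrite lee_fin dist4_le // -SE.
Qed.

Lemma distortion_dist4 (S : {fset R}) p q : S =i [:: 4^-1; 2^-1; p; q] ->
  distortion P S = cost p q 0 1.
Proof.
move=> SE; rewrite /distortion (mindist_dist4 SE) integral_uniform //=.
- by rewrite subr0 invr1 mul1e.
- by apply/measurable_EFinP; exact: measurable_dist4.
- by move=> x; rewrite lee_fin dist4_ge0.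
Qed.

Lemma distortion_ge (A : {fset R}) : (#|` A| <= 2)%N ->
  ((5 / 768)%:E <= distortion P (A `|` beta)%fset)%E.
Proof.
by move=> /(fsetU2_enum (4^-1) (2^-1))[p [q /distortion_dist4 ->]]; exact: cost_ge.
Qed.

Lemma alpha4E : alpha4 =i [:: 4^-1; 2^-1; 12^-1; 5 / 6].
Proof.
by move=> a; rewrite !inE; case: (a == 4^-1); case: (a == 2^-1); rewrite ?orbT ?orbF.
Qed.

Lemma alpha4_fsetU : alpha4 = ([fset 12^-1; 5 / 6] `|` beta)%fset.
Proof.
apply/fsetP => a; rewrite alpha4E in_fsetU !inE.
by case: (a == 4^-1); case: (a == 2^-1); rewrite ?orbT ?orbF.
Qed.

Lemma distortion_alpha4 : distortion P alpha4 = (5 / 768)%:E.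
Proof. by rewrite (distortion_dist4 alpha4E) cost_optimum. Qed.

Lemma distortion_eq_min (A : {fset R}) : (#|` A| <= 2)%N ->
  distortion P (A `|` beta)%fset = (5 / 768)%:E -> (A `|` beta)%fset = alpha4.
Proof.
move=> /(fsetU2_enum (4^-1) (2^-1))[p [q SE]].
rewrite (distortion_dist4 SE) => cost_min.
have [[p_opt q_opt]|[p_opt q_opt]] : (p = 12^-1 /\ q = 5 / 6) \/ (p = 5 / 6 /\ q = 12^-1).
  by apply: contrapT => /cost_gt; rewrite cost_min ltxx.
all: apply/fsetP => a; rewrite SE alpha4E p_opt q_opt !inE.
all: by case: (a == 12^-1); case: (a == 5 / 6); rewrite ?orbT ?orbF.
Qed.

Lemma card_beta : #|` beta| = 2%N.
Proof. by rewrite cardfs2 (_ : 4^-1 != 2^-1 :> R) //; apply/eqP; lra. Qed.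

Lemma condV_beta4 : condV P beta 4 = (5 / 768)%:E.
Proof.
apply/le_anti/andP; split.
  apply: ereal_inf_lbound; exists [fset 12^-1; 5 / 6]%fset.
    by rewrite /= card_beta cardfs2; case: (_ != _).
  by rewrite -alpha4_fsetU distortion_alpha4.
apply/ereal_infP => _ [A /= cardA <-]; apply: distortion_ge.
by rewrite card_beta in cardA.
Qed.

Lemma uniform01_itv (a b : R) : 0 <= a -> a <= b -> b <= 1 ->
  P [set` `[a, b]] = (b - a)%:E.
Proof.
move=> a0 ab b1; rewrite /= /uniform_prob (eq_integral (fun=> 1%:E)); last first.
  move=> x; rewrite inE /= in_itv /= => /andP[xa xb].
  by rewrite /uniform_pdf ifT ?subr0 ?invr1 //; apply/andP; split; lra.
rewrite integral_cst //= lebesgue_measure_itv /= lte_fin mul1e.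
by case: ltP => // ba; rewrite (@le_anti _ _ a b) ?ab ?ba // subrr.
Qed.

Lemma voronoi_alpha4_quarter : voronoi alpha4 (4^-1) = [set` `[6^-1, 3 / 8]].
Proof.
apply/seteqP; split => x /=; rewrite in_itv /=.
  move=> near; have := near (12^-1); have := near (2^-1).
  by rewrite !alpha4E !inE !eqxx ?orbT => /(_ isT) ? /(_ isT) ?; apply/andP; split; nra.
by move=> /andP[? ?] b; rewrite alpha4E !inE => /or4P[] /eqP ->; nra.
Qed.

Lemma voronoi_alpha4_half : voronoi alpha4 (2^-1) = [set` `[3 / 8, 2 / 3]].
Proof.
apply/seteqP; split => x /=; rewrite in_itv /=.
  move=> near; have := near (4^-1); have := near (5 / 6).
  by rewrite !alpha4E !inE !eqxx ?orbT => /(_ isT) ? /(_ isT) ?; apply/andP; split; nra.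
by move=> /andP[? ?] b; rewrite alpha4E !inE => /or4P[] /eqP ->; nra.
Qed.

End Distortion.

Theorem proposition3p3 (R : realType) :
  let P : probability (measurableTypeR R) R := uniform_prob (@ltr01 R) in
  let beta : {fset R} := [fset 4^-1; 2^-1]%fset in
  let alpha4 : {fset R} := [fset 12^-1; 4^-1; 2^-1; 5 / 6]%fset in
  [/\ cond_optimal P beta 4 alpha4,
      (forall S : {fset R}, cond_optimal P beta 4 S -> S = alpha4) &
      condV P beta 4 = (5 / 768)%:E].
Proof.
move=> P beta alpha4; split; last exact: condV_beta4.
- split; first by rewrite card_beta.
  exists [fset 12^-1; 5 / 6]%fset; split.
  + by rewrite card_beta cardfs2; case: (_ != _).
  + exact: alpha4_fsetU.
  + by rewrite distortion_alpha4 condV_beta4.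
  + move=> b; rewrite in_fset2 => /orP[] /eqP ->;
      rewrite /P ?voronoi_alpha4_quarter ?voronoi_alpha4_half uniform01_itv ?lte_fin; lra.
- move=> S [_ [A [cardA -> dist_min _]]]; apply: distortion_eq_min.
    by rewrite card_beta in cardA.
  by rewrite dist_min condV_beta4.
Qed.
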